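(* Let $f\in\mathbb{C}[h]$ and let $V$ be a simple $\mathcal{H}(f)$-module with $\dim V=n<\infty$. If $x^nV\neq 0$, then $V\cong A'_{\mathcal{H}(f)}(\lambda,\dot z,a)$ for some $\dot z\in\mathbb{C}$, $a\in\mathbb{C}^*$ and $\lambda\in S_f$ with $|\lambda|=n$.
   Context: For $f(h)\in\mathbb{C}[h]$, $\mathcal{H}(f)$ is the unital associative $\mathbb{C}$-algebra generated by $x,y,h$ with relations $hx=xf(h)$, $yh=f(h)y$, $yx-xy=f(h)-h$. $S_f$ is the set of maps $\lambda:\mathbb{Z}\to\mathbb{C}$ with $f(\lambda(i))=\lambda(i+1)$ for all $i$; $|\lambda|$ is the nonnegative generator of the subgroup $\{m\in\mathbb{Z}\mid\lambda(i+m)=\lambda(i)\ \forall i\}$. For $\lambda\in S_f$ with $|\lambda|=m\neq0$, $\dot z\in\mathbb{C}$, $a\in\mathbb{C}^*$: $A'_{\mathcal{H}(f)}(\lambda,\dot z,a)$ is the quotient of $\mathbb{C}[t,t^{-1}]$ by $\mathbb{C}[t,t^{-1}](t^m-a)$, with $\mathcal{H}(f)$-action induced by $ht^i=\lambda(i)t^i$, $xt^i=t^{i+1}$, $yt^i=(\lambda(i)+\dot z)t^{i-1}$ ($i\in\mathbb{Z}$). *)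

From HB Require Import structures.
From mathcomp Require Import all_boot all_order all_algebra.
Set Implicit Arguments. Unset Strict Implicit. Unset Printing Implicit Defensive.
Import Order.TTheory GRing.Theory Num.Theory.
Local Open Scope ring_scope.

(* Conventions: a finite-dimensional module V over H(f) with dim V = n is
   represented (after choosing a basis) by C^n = column vectors 'cV[C]_n,
   with the generators x, y, h acting by left multiplication by the matrices
   X, Y, H.  Hence the action of a product ab is (action a) *m (action b). *)

Definition peval_mx (C : comNzRingType) (n : nat) (p : {poly C}) (A : 'M[C]_n)
  : 'M[C]_n := \sum_(i < size p) p`_i *: A ^+ i.

(* X, Y, H satisfy the defining relations of H(f):
   hx = x f(h),  yh = f(h) y,  yx - xy = f(h) - h *)
Definition Hf_module (C : comNzRingType) (f : {poly C}) (n : nat)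
  (X Y H : 'M[C]_n) : Prop :=
  [/\ H *m X = X *m peval_mx f H,
      Y *m H = peval_mx f H *m Y &
      Y *m X - X *m Y = peval_mx f H - H].

(* the column space of W (a subspace of C^n) is stable under M *)
Definition mx_invariant (C : fieldType) (n : nat) (M W : 'M[C]_n) : bool :=
  (((M *m W)^T) <= W^T)%MS.

Definition simple_mod (C : fieldType) (n : nat) (X Y H : 'M[C]_n) : Prop :=
  (0 < n)%N /\
  forall W : 'M[C]_n,
    mx_invariant X W -> mx_invariant Y W -> mx_invariant H W ->
    \rank W = 0%N \/ \rank W = n.

Definition in_Sf (C : comNzRingType) (f : {poly C}) (lam : int -> C) : Prop :=
  forall i : int, f.[lam i] = lam (i + 1).

Definition is_period (C : Type) (lam : int -> C) (k : int) : Prop :=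
  forall i : int, lam (i + k) = lam i.

Definition lam_size (C : Type) (lam : int -> C) (m : nat) : Prop :=
  is_period lam m%:Z /\ forall k : int, is_period lam k -> (m%:Z %| k)%Z.

(* The module A'(lam, zdot, a) = C[t,t^-1]/(t^m - a), m = |lam| > 0,
   in the basis (images of) t^0, ..., t^(m-1).  The image of t^i (i in Z)
   is a^(i div m) t^(i mod m). *)
Definition tvec (C : fieldType) (m : nat) (a : C) (i : int) : 'cV[C]_m :=
  \col_(j < m) (if (j : nat) == absz (i %% m%:Z)%Z then a ^ (i %/ m%:Z)%Z else 0).

(* matrix of x : column j is the image of x t^j = t^(j+1) *)
Definition Ap_X (C : fieldType) (m : nat) (a : C) : 'M[C]_m :=
  \matrix_(k < m, j < m) tvec m a ((j : nat)%:Z + 1) k ord0.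

Definition Ap_H (C : fieldType) (m : nat) (lam : int -> C) (a : C) : 'M[C]_m :=
  \matrix_(k < m, j < m) (lam (j : nat)%:Z *: tvec m a (j : nat)%:Z) k ord0.

Definition Ap_Y (C : fieldType) (m : nat) (lam : int -> C) (zd a : C)
  : 'M[C]_m :=
  \matrix_(k < m, j < m)
     ((lam (j : nat)%:Z + zd) *: tvec m a ((j : nat)%:Z - 1)) k ord0.

Definition mod_iso (C : fieldType) (n : nat) (X Y H X' Y' H' : 'M[C]_n) : Prop :=
  exists P : 'M[C]_n,
    [/\ P \in unitmx, P *m X = X' *m P, P *m Y = Y' *m P & P *m H = H' *m P].

From HB Require Import structures.
From mathcomp Require Import all_boot all_order all_algebra zify.
Import Order.TTheory GRing.Theory Num.Theory.
Set Implicit Arguments.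
Unset Strict Implicit.
Unset Printing Implicit Defensive.
Local Open Scope ring_scope.

(* By Schur's lemma the central element xy - h is a scalar z, so
   yx = f(h) + z.  The image of a stable power of x is then a submodule, which
   is nonzero because x^n <> 0; hence x is invertible.  Since h x = x f(h),
   x^k carries the mu-eigenspace of h into its f^k(mu)-eigenspace; h having at
   most n eigenvalues, some eigenvalue mu is f-periodic, of least period
   p <= n.  Then x^p preserves the mu-eigenspace and has an eigenvector w in it,
   with eigenvalue a <> 0.  The vectors x^k w satisfy x^(k+p) w = a x^k w,
   h x^k w = f^k(mu) x^k w and y x^(k+1) w = (f^(k+1)(mu) + z) x^k w, so they
   span a submodule, which must be V; thus p = n and w, xw, ..., x^(n-1) w is a
   basis in which x, y, h act exactly as on A'(lam, z, a), where lam is the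
   periodic orbit i |-> f^(i mod n)(mu). *)

Lemma peval_mx_horner (C : comNzRingType) (n : nat) (p : {poly C})
    (A : 'M[C]_n.+1) :
  peval_mx p A = horner_mx A p.
Proof.
rewrite /peval_mx -[X in horner_mx _ X]coefK poly_def rmorph_sum.
apply: eq_bigr => i _; rewrite -mul_polyC rmorphM /= horner_mx_C rmorphXn /=.
by rewrite horner_mx_X -mulmxE mul_scalar_mx.
Qed.

Lemma horner_mx_eigen (C : comNzRingType) (n m : nat) (A : 'M[C]_n.+1)
    (V : 'M[C]_(n.+1, m)) (mu : C) (p : {poly C}) :
  A *m V = mu *: V -> horner_mx A p *m V = p.[mu] *: V.
Proof.
move=> AV; elim/poly_ind: p => [|q c IHq].
  by rewrite rmorph0 mul0mx horner0 scale0r.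
rewrite rmorphD rmorphM /= horner_mx_X horner_mx_C mulmxDl -mulmxE -mulmxA AV.
by rewrite -scalemxAr IHq scalerA mul_scalar_mx hornerMXaddC scalerDl mulrC.
Qed.

Lemma eq_mx_col (R : Type) (m n : nat) (A B : 'M[R]_(m, n)) :
  (forall j, col j A = col j B) -> A = B.
Proof.
by move=> eqAB; apply/matrixP => i j; have /colP/(_ i) := eqAB j; rewrite !mxE.
Qed.

Lemma col_mulmx (R : pzRingType) (m n p : nat) (A : 'M[R]_(m, n))
    (B : 'M[R]_(n, p)) (j : 'I_p) :
  col j (A *m B) = A *m col j B.
Proof. by rewrite !colE mulmxA. Qed.

Lemma tr_eigen (C : fieldType) (m n : nat) (A : 'M[C]_n) (V : 'M[C]_(m, n))
    (mu : C) :
  V *m A^T = mu *: V <-> A *m V^T = mu *: V^T.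
Proof.
split=> eAV; first by rewrite -[A]trmxK -trmx_mul eAV linearZ.
by apply: trmx_inj; rewrite trmx_mul trmxK eAV linearZ.
Qed.

Lemma mx_invariant_intertwine (C : fieldType) (n : nat) (M W B : 'M[C]_n) :
  M *m W = W *m B -> mx_invariant M W.
Proof. by move=> eMW; rewrite /mx_invariant eMW trmx_mul submxMl. Qed.

Lemma mx_invariant_cols (C : fieldType) (n : nat) (M W : 'M[C]_n) :
  (forall j, ((M *m col j W)^T <= W^T)%MS) -> mx_invariant M W.
Proof. by move=> sub; apply/row_subP => j; rewrite -tr_col col_mulmx. Qed.

Lemma mod_iso_intertwine (C : fieldType) (n : nat) (X Y H X' Y' H' W : 'M[C]_n) :
  W \in unitmx -> X *m W = W *m X' -> Y *m W = W *m Y' -> H *m W = W *m H' ->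
  mod_iso X Y H X' Y' H'.
Proof.
move=> Wu eX eY eH.
have conj (M M' : 'M[C]_n) : M *m W = W *m M' -> invmx W *m M = M' *m invmx W.
  move=> eM; rewrite -[invmx W *m M]mulmx1 -(mulmxV Wu) !mulmxA.
  by rewrite -[invmx W *m M *m W]mulmxA eM mulmxA mulVmx // mul1mx.
by exists (invmx W); split; rewrite ?unitmx_inv //; apply: conj.
Qed.

Lemma col_eigenvector (C : numClosedFieldType) (n : nat) (A : 'M[C]_n.+1) :
  exists mu (w : 'cV[C]_n.+1), w != 0 /\ A *m w = mu *: w.
Proof.
have [mu /eigenvalueP [v /tr_eigen Av v_neq0]] := eigenvalue_closed A^T (ltn0Sn n).
by exists mu, v^T; rewrite trmx_eq0.
Qed.

Lemma col_eigen_root (C : fieldType) (n : nat) (A : 'M[C]_n) (w : 'cV[C]_n)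
    (mu : C) :
  w != 0 -> A *m w = mu *: w -> root (char_poly A^T) mu.
Proof.
move=> w_neq0 Aw; rewrite -eigenvalue_root_char; apply/eigenvalueP.
by exists w^T; [apply/tr_eigen; rewrite trmxK | rewrite trmx_eq0].
Qed.

Lemma uniq_roots_char_poly (C : fieldType) (n : nat) (A : 'M[C]_n) (s : seq C) :
  uniq s -> all (root (char_poly A)) s -> (size s <= n)%N.
Proof.
move=> s_uniq s_roots.
have := max_poly_roots (monic_neq0 (char_poly_monic A)) s_roots s_uniq.
by rewrite size_char_poly.
Qed.

Lemma stable_eigenvector (C : numClosedFieldType) (m n : nat) (V : 'M[C]_(m, n))
    (B : 'M[C]_n) :
  stablemx V B -> V != 0 ->
  exists a (u : 'rV[C]_n), [/\ u != 0, (u <= V)%MS & u *m B = a *: u].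
Proof.
move=> sVB V_neq0; have rV : (0 < \rank V)%N by rewrite lt0n mxrank_eq0.
have [a /eigenvalueP [u0 u0B u0_neq0]] :=
  eigenvalue_closed (conjmx (row_base V) B) rV.
have uB : (u0 *m row_base V <= eigenspace B a)%MS.
  rewrite -sub_eigenspace_conjmx ?stablemx_row_base ?row_base_free //.
  exact/eigenspaceP.
exists a, (u0 *m row_base V); split; last exact/eigenspaceP.
- by rewrite mulmx_free_eq0 ?row_base_free.
- by rewrite mulmx_sub // eq_row_base.
Qed.

Lemma rank_pow_stable (C : fieldType) (n : nat) (A : 'M[C]_n.+1) :
  A ^+ n.+1 != 0 -> exists2 k, (k <= n)%N & \rank (A ^+ k.+1) = \rank (A ^+ k).
Proof.
move=> An_neq0; pose r k := \rank (A ^+ k).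
have r_dec k : (r k.+1 <= r k)%N by rewrite /r exprSr -mulmxE mxrankM_maxl.
have [k /eqP rk | no_eq] := pickP (fun k : 'I_n.+1 => r k.+1 == r k).
  by exists k; [rewrite -ltnS | ].
have r_bound k : (k <= n.+1)%N -> (r k + k <= n.+1)%N.
  elim: k => [|k IHk] k_le; first by rewrite addn0 /r expr0 mxrank1.
  have r_lt : (r k.+1 < r k)%N by rewrite ltn_neqAle (no_eq (Ordinal k_le)) r_dec.
  by have := IHk (ltnW k_le); lia.
have /eqP : r n.+1 = 0%N by have := r_bound n.+1 (leqnn _); lia.
by rewrite /r mxrank_eq0 (negbTE An_neq0).
Qed.

(* If A^(k+1) and A^k have the same rank, they have the same column space, so
   A^k factors through A^(k+1). *)
Lemma pow_rank_factor (C : fieldType) (n k : nat) (A : 'M[C]_n.+1) :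
  \rank (A ^+ k.+1) = \rank (A ^+ k) -> exists D : 'M[C]_n.+1, A ^+ k = A ^+ k.+1 *m D.
Proof.
move=> rk.
have sub1 : ((A ^+ k.+1)^T <= (A ^+ k)^T)%MS by rewrite exprSr -mulmxE trmx_mul submxMl.
have sub2 : ((A ^+ k)^T <= (A ^+ k.+1)^T)%MS.
  by rewrite -(mxrank_leqif_sup sub1).2 !mxrank_tr rk.
have [D eD] := submxP sub2.
by exists D^T; rewrite -[A ^+ k]trmxK eD trmx_mul trmxK.
Qed.

(* The bi-infinite sequence i |-> F^(i mod p)(mu); when mu has period p under
   F this is the orbit of mu, indexed by Z. *)
Definition periodic_orbit {T : Type} (F : T -> T) (mu : T) (p : nat) (i : int) : T :=
  iter (absz (i %% p%:Z)%Z) F mu.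

Section PeriodicOrbits.
Variables (T : eqType) (F : T -> T).

Definition least_period (mu : T) (p : nat) : Prop :=
  [/\ (0 < p)%N, iter p F mu = mu &
      forall q, (0 < q)%N -> iter q F mu = mu -> (p <= q)%N].

Lemma iter_inj_least_period (mu : T) (p : nat) :
  least_period mu p ->
  forall k1 k2, (k1 < p)%N -> (k2 < p)%N -> iter k1 F mu = iter k2 F mu -> k1 = k2.
Proof.
case=> _ mu_per p_min.
suff neq k1 k2 : (k1 < k2 < p)%N -> iter k1 F mu != iter k2 F mu.
  move=> k1 k2 k1p k2p e; case: (ltngtP k1 k2) => // lt12.
  - by have := neq k1 k2; rewrite lt12 k2p e eqxx => /(_ isT).
  - by have := neq k2 k1; rewrite lt12 k1p e eqxx => /(_ isT).
case/andP=> lt12 k2p; apply/eqP => e.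
have back : iter (p - k2 + k1) F mu = mu.
  by rewrite iterD e -iterD subnK ?(ltnW k2p).
have pos : (0 < p - k2 + k1)%N by lia.
by have := p_min _ pos back; lia.
Qed.

Lemma bounded_orbit_cycle (P : pred T) (N : nat) (x : T) :
  (forall k, P (iter k F x)) -> (forall s, uniq s -> all P s -> (size s <= N)%N) ->
  exists i p, (p <= N)%N /\ least_period (iter i F x) p.
Proof.
move=> P_orbit bound.
have [i [j [ij eij]]] : exists i j, (i < j)%N /\ iter i F x = iter j F x.
  have : ~~ uniq [seq iter k F x | k <- iota 0 N.+1].
    apply/negP => s_uniq; suff: all P [seq iter k F x | k <- iota 0 N.+1].
      by move/(bound _ s_uniq); rewrite size_map size_iota ltnn.
    by apply/allP => _ /mapP[k _ ->].
  case/(uniqPn x) => i [j [ij]]; rewrite size_map size_iota => jN.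
  rewrite !(nth_map 0%N) ?size_iota ?(ltn_trans ij) // !nth_iota ?(ltn_trans ij) //.
  by exists i, j.
pose mu := iter i F x.
have ex_per : exists q, (0 < q)%N && (iter q F mu == mu).
  by exists (j - i)%N; rewrite subn_gt0 ij /mu -iterD subnK ?(ltnW ij) // eij eqxx.
case: (ex_minnP ex_per) => p /andP[p_gt0 /eqP mu_per] p_min.
have least : least_period mu p.
  by split=> // q q_gt0 mu_q; apply: p_min; rewrite q_gt0 mu_q eqxx.
exists i, p; split=> //.
have := bound [seq iter k F mu | k <- iota 0 p]; rewrite size_map size_iota; apply.
  rewrite map_inj_in_uniq ?iota_uniq // => k1 k2.
  by rewrite !mem_iota !add0n; apply: iter_inj_least_period.
by apply/allP => _ /mapP[k _ ->]; rewrite /mu -iterD.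
Qed.

Lemma periodic_orbit_nat (mu : T) (p k : nat) :
  (k < p)%N -> periodic_orbit F mu p k = iter k F mu.
Proof. by move=> kp; rewrite /periodic_orbit modz_nat /= modn_small. Qed.

Lemma periodic_orbit_step (mu : T) (p : nat) (i : int) :
  (0 < p)%N -> iter p F mu = mu ->
  F (periodic_orbit F mu p i) = periodic_orbit F mu p (i + 1).
Proof.
move=> p_gt0 mu_per; rewrite /periodic_orbit.
have [r_lt r_eq] : (absz (i %% p)%Z < p)%N /\ Posz (absz (i %% p)%Z) = (i %% p)%Z.
  by split; lia.
move: r_lt r_eq; set r := absz _ => r_lt r_eq.
have rS : (Posz r + 1 = Posz r.+1)%R by lia.
rewrite -modzDml -r_eq rS modz_nat /=.
case: (ltngtP r.+1 p) => [r_lt' | r_gt | r_eqp]; [by rewrite modn_small | lia |].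
by rewrite -r_eqp modnn /= -{2}mu_per -r_eqp.
Qed.

Lemma periodic_orbit_size (mu : T) (p : nat) :
  least_period mu p -> lam_size (periodic_orbit F mu p) p.
Proof.
case=> p_gt0 _ p_min; split=> [i | k k_per]; first by rewrite /periodic_orbit modzDr.
have := k_per 0; rewrite add0r /periodic_orbit mod0z /=.
have : (absz (k %% p)%Z < p)%N by lia.
set r := absz _ => r_lt mu_r.
have [r0 | r_gt0] := posnP r; first by apply/dvdz_mod0P; move: r0; rewrite /r; lia.
by have := p_min _ r_gt0 mu_r; lia.
Qed.
End PeriodicOrbits.

Section ModelModule.
Variables (C : fieldType) (a : C).

Lemma tvec_nat (m k : nat) :
  tvec m.+1 a k = a ^+ (k %/ m.+1) *: delta_mx (inord (k %% m.+1)) 0.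
Proof.
apply/colP => r; rewrite !mxE eqxx andbT modz_nat divz_nat /=.
rewrite -val_eqE /= inordK ?ltn_pmod //.
by case: eqP => _; rewrite ?mulr1 ?mulr0.
Qed.

Lemma tvec_N1 (m : nat) : tvec m.+1 a (-1) = a^-1 *: delta_mx ord_max 0.
Proof.
have eN1 : (-1 : int) = -1 * (m.+1)%:Z + m%:Z by lia.
have m_bounds : (0 <= Posz m < Posz m.+1)%R by apply/andP; split; lia.
have mod_N1 : absz ((-1) %% m.+1)%Z = m by rewrite eN1 modzMDl modz_small.
have div_N1 : ((-1) %/ m.+1)%Z = -1 by rewrite {1}eN1 divzMDl // divz_small ?addr0.
apply/colP => r; rewrite !mxE eqxx andbT mod_N1 div_N1 exprN1 -val_eqE /=.
by case: eqP => _; rewrite ?mulr1 ?mulr0.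
Qed.

Lemma col_Ap_X (m : nat) (c : 'I_m) : col c (Ap_X m a) = tvec m a c.+1.
Proof.
have cS : (Posz c + 1 = Posz c.+1)%R by lia.
by apply/colP => r; rewrite !mxE cS.
Qed.

Lemma col_Ap_H (m : nat) (lam : int -> C) (c : 'I_m) :
  col c (Ap_H m lam a) = lam c *: tvec m a c.
Proof. by apply/colP => r; rewrite !mxE. Qed.

Lemma col_Ap_Y (m : nat) (lam : int -> C) (zd : C) (c : 'I_m) :
  col c (Ap_Y m lam zd a) = (lam c + zd) *: tvec m a (Posz c - 1).
Proof. by apply/colP => r; rewrite !mxE. Qed.

End ModelModule.

Section SimpleModule.
Variables (C : numClosedFieldType) (f : {poly C}) (n : nat) (X Y H : 'M[C]_n.+1).
Hypothesis HX : H *m X = X *m horner_mx H f.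
Hypothesis YH : Y *m H = horner_mx H f *m Y.
Hypothesis YX_XY : Y *m X - X *m Y = horner_mx H f - H.
Hypothesis simple : forall W : 'M[C]_n.+1,
  mx_invariant X W -> mx_invariant Y W -> mx_invariant H W ->
  \rank W = 0%N \/ \rank W = n.+1.
Hypothesis Xn_neq0 : X ^+ n.+1 != 0.

(* Schur's lemma: an endomorphism of the simple module V is a scalar (its
   eigenspace for any eigenvalue is a nonzero submodule). *)
Lemma schur_scalar (M : 'M[C]_n.+1) :
  M *m X = X *m M -> M *m Y = Y *m M -> M *m H = H *m M -> exists a, M = a%:M.
Proof.
move=> MX MY MH; have [a Ea] := eigenvalue_closed M^T (ltn0Sn n).
pose E := eigenspace M^T a.
have E_inv N : N *m M = M *m N -> mx_invariant N E^T.
  move=> NM; rewrite /mx_invariant trmx_mul trmxK; apply: comm_mx_stable_eigenspace.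
  by rewrite /comm_mx -!trmx_mul NM.
have [] := simple (E_inv _ (esym MX)) (E_inv _ (esym MY)) (E_inv _ (esym MH)).
  by rewrite mxrank_tr => /eqP; rewrite mxrank_eq0 (negbTE Ea).
rewrite mxrank_tr => rE; have : (1%:M <= E)%MS by rewrite sub1mx /row_full rE.
move/eigenspaceP; rewrite mul1mx => ME.
by exists a; rewrite -[M]trmxK ME scalemx1 tr_scalar_mx.
Qed.

(* xy - h is central, hence a scalar z, and then yx = f(h) + z. *)
Lemma YX_eval : exists z, Y *m X = horner_mx H (f + z%:P).
Proof.
have YXE : Y *m X = X *m Y + (horner_mx H f - H) by rewrite -YX_XY addrC subrK.
have [z XY_H] : exists z, X *m Y - H = z%:M.
  apply: schur_scalar.
  - rewrite mulmxBl mulmxBr HX -!mulmxA YXE mulmxDr mulmxBr mulmxA.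
    by rewrite [X *m horner_mx H f - _]addrC addrA addrK.
  - rewrite mulmxBl mulmxBr -!mulmxA [Y *m (X *m Y)]mulmxA YXE mulmxDl mulmxBl.
    by rewrite YH -mulmxA [horner_mx H f *m Y - _]addrC addrA addrK.
  - by rewrite mulmxBl mulmxBr -!mulmxA YH [H *m (X *m Y)]mulmxA HX !mulmxA.
by exists z; rewrite YXE rmorphD /= horner_mx_C -XY_H addrCA.
Qed.

Lemma horner_H_mulX (p : {poly C}) :
  horner_mx H p *m X = X *m horner_mx H (p \Po f).
Proof.
elim/poly_ind: p => [|q c IHq]; first by rewrite comp_poly0 rmorph0 mul0mx mulmx0.
rewrite comp_polyD comp_polyM comp_polyX comp_polyC !rmorphD !rmorphM /=.
rewrite horner_mx_X !horner_mx_C -!mulmxE mulmxDl mulmxDr -mulmxA HX mulmxA IHq.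
by rewrite -!mulmxA scalar_mxC.
Qed.

Lemma horner_H_mulXn (k : nat) (p : {poly C}) :
  horner_mx H p *m X ^+ k = X ^+ k *m horner_mx H (iter k (comp_poly f) p).
Proof.
elim: k => [|k IHk]; first by rewrite expr0 mulmx1 mul1mx.
by rewrite exprSr -mulmxE mulmxA IHk -[LHS]mulmxA horner_H_mulX mulmxA.
Qed.

(* x acts invertibly: once the ranks of the x^k stabilise, the image of x^k is
   a submodule (stable under y by yx = f(h) + z), nonzero because x^n != 0. *)
Lemma X_unit : X \in unitmx.
Proof.
have [k k_le rk] := rank_pow_stable Xn_neq0.
have [D XkD] := pow_rank_factor rk.
have [z YXz] := YX_eval.
have iX : mx_invariant X (X ^+ k).
  by apply: (@mx_invariant_intertwine _ _ _ _ X); rewrite mulmxE -exprS exprSr.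
have iH : mx_invariant H (X ^+ k).
  by have := horner_H_mulXn k 'X; rewrite horner_mx_X; apply: mx_invariant_intertwine.
have iY : mx_invariant Y (X ^+ k).
  apply: (@mx_invariant_intertwine _ _ _ _
    (horner_mx H (iter k (comp_poly f) (f + z%:P)) *m D)).
  by rewrite {1}XkD exprS -mulmxE !mulmxA YXz horner_H_mulXn.
have [/eqP | rXk] := simple iX iY iH.
  rewrite mxrank_eq0 => /eqP Xk0; case/negP: Xn_neq0.
  have -> : X ^+ n.+1 = X ^+ (n.+1 - k) * X ^+ k by rewrite -exprD subnK ?leqW.
  by rewrite Xk0 mulr0.
have : X ^+ k.+1 \in unitmx by rewrite -row_free_unit /row_free rk rXk.
by rewrite exprSr -mulmxE unitmx_mul => /andP[].
Qed.

Lemma Xn_inj (k : nat) (u : 'cV[C]_n.+1) : X ^+ k *m u = 0 -> u = 0.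
Proof.
have Xk_unit : X ^+ k \in unitmx by apply: unitrX; apply: X_unit.
by move=> Xku; rewrite -[u](mulKmx Xk_unit) Xku mulmx0.
Qed.

Lemma Xn_eigen (m k : nat) (V : 'M[C]_(n.+1, m)) (mu : C) :
  H *m V = mu *: V -> H *m (X ^+ k *m V) = iter k (horner f) mu *: (X ^+ k *m V).
Proof.
move=> HV; elim: k => [|k IHk]; first by rewrite expr0 !mul1mx.
rewrite exprS -mulmxE -!mulmxA [H *m _]mulmxA HX -mulmxA (horner_mx_eigen _ IHk).
by rewrite -scalemxAr.
Qed.

(* h has an eigenvector whose eigenvalue is f-periodic, with least period
   p <= n+1: the eigenvalues f^k(mu0) of the vectors x^k w0 are roots of the
   characteristic polynomial of h. *)
Lemma periodic_eigenvector :
  exists mu p (w : 'cV[C]_n.+1),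
    [/\ w != 0, H *m w = mu *: w, (p <= n.+1)%N & least_period (horner f) mu p].
Proof.
have [mu0 [w0 [w0_neq0 Hw0]]] := col_eigenvector H.
have Xkw0_neq0 k : X ^+ k *m w0 != 0 by apply: contraNneq w0_neq0 => /Xn_inj ->.
have orbit_roots k : root (char_poly H^T) (iter k (horner f) mu0).
  exact: col_eigen_root (Xkw0_neq0 k) (Xn_eigen k Hw0).
have [i [p [p_le least]]] :=
  bounded_orbit_cycle orbit_roots (@uniq_roots_char_poly _ _ H^T).
exists (iter i (horner f) mu0), p, (X ^+ i *m w0).
by split; [apply: Xkw0_neq0 | apply: Xn_eigen |..].
Qed.

(* If f^p(mu) = mu then x^p preserves the mu-eigenspace of h, hence has an
   eigenvector in it; its eigenvalue a is nonzero since x is invertible. *)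
Lemma Xp_eigenvector (mu : C) (p : nat) (w : 'cV[C]_n.+1) :
  w != 0 -> H *m w = mu *: w -> iter p (horner f) mu = mu ->
  exists a (u : 'cV[C]_n.+1),
    [/\ u != 0, a != 0, H *m u = mu *: u & X ^+ p *m u = a *: u].
Proof.
move=> w_neq0 Hw mu_per; pose E := eigenspace H^T mu.
have HE : H *m E^T = mu *: E^T by apply/tr_eigen/eigenspaceP.
have E_stable : stablemx E (X ^+ p)^T.
  by apply/eigenspaceP/tr_eigen; rewrite trmx_mul trmxK (Xn_eigen _ HE) mu_per.
have wE : (w^T <= E)%MS by apply/eigenspaceP/tr_eigen; rewrite trmxK.
have E_neq0 : E != 0.
  by apply: contraNneq w_neq0 => E0; move: wE; rewrite E0 submx0 trmx_eq0.
have [a [u [u_neq0 uE uXp]]] := stable_eigenvector E_stable E_neq0.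
have Xpu : X ^+ p *m u^T = a *: u^T by apply/tr_eigen.
exists a, u^T; split; rewrite ?trmx_eq0 //; last exact/tr_eigen/eigenspaceP.
apply: contraNneq u_neq0 => a0; move: Xpu; rewrite a0 scale0r => /Xn_inj/eqP.
by rewrite trmx_eq0.
Qed.

(* The
   vectors x^k w (written [v k]) span a submodule, which is therefore all of V;
   they form a basis in which x, y, h act as on A'(lam, z, a). *)
Section CyclicBasis.
Variables (mu a z : C) (p : nat) (w : 'cV[C]_n.+1).
Hypothesis YXz : Y *m X = horner_mx H (f + z%:P).
Hypothesis w_neq0 : w != 0.
Hypothesis Hw : H *m w = mu *: w.
Hypothesis Xpw : X ^+ p *m w = a *: w.
Hypothesis a_neq0 : a != 0.
Hypothesis p_le : (p <= n.+1)%N.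
Hypothesis mu_least : least_period (horner f) mu p.

Local Notation v k := (X ^+ k *m w).

Definition cyclic_basis : 'M[C]_n.+1 := \matrix_(r, c) (X ^+ c *m w) r 0.

Let p_gt0 : (0 < p)%N. Proof. by case: mu_least. Qed.
Let mu_per : iter p (horner f) mu = mu. Proof. by case: mu_least. Qed.

Lemma cyclic_basis_col (c : 'I_n.+1) : col c cyclic_basis = v c.
Proof. by apply/colP => r; rewrite !mxE. Qed.

Lemma Xw_shift (k : nat) : v (k + p) = a *: v k.
Proof. by rewrite exprD -mulmxE -mulmxA Xpw scalemxAr. Qed.

Lemma Xw_mod (k : nat) : v k = a ^+ (k %/ p) *: v (k %% p).
Proof.
rewrite {1}(divn_eq k p); elim: (k %/ p)%N => [|q IHq].
  by rewrite mul0n add0n expr0 scale1r.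
have -> : (q.+1 * p + k %% p = (q * p + k %% p) + p)%N by rewrite mulSn; lia.
by rewrite Xw_shift IHq scalerA exprS.
Qed.

Lemma Xw_H (k : nat) : H *m v k = iter k (horner f) mu *: v k.
Proof. exact: Xn_eigen. Qed.

Lemma Xw_Y (k : nat) : Y *m v k.+1 = (iter k.+1 (horner f) mu + z) *: v k.
Proof.
rewrite exprS -mulmxE !mulmxA YXz -mulmxA (horner_mx_eigen _ (Xw_H k)).
by rewrite hornerD hornerC iterS.
Qed.

Lemma Xw_Y0 : Y *m w = (a^-1 * (mu + z)) *: v p.-1.
Proof.
have wE : w = a^-1 *: v p by rewrite Xpw scalerA mulVf // scale1r.
rewrite {1}wE -scalemxAr -{1}(prednK p_gt0) Xw_Y (prednK p_gt0) mu_per.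
by rewrite scalerA.
Qed.

Lemma Xw_in_basis (k : nat) : ((v k)^T <= cyclic_basis^T)%MS.
Proof.
rewrite Xw_mod linearZ /= scalemx_sub //.
have kp : (k %% p < n.+1)%N by apply: leq_trans p_le; rewrite ltn_mod.
have -> : v (k %% p) = col (Ordinal kp) cyclic_basis by rewrite cyclic_basis_col.
by rewrite tr_col row_sub.
Qed.

(* By simplicity, the span of the x^k w is the whole space. *)
Lemma cyclic_basis_unit : cyclic_basis \in unitmx.
Proof.
have inv M : (forall k, ((M *m v k)^T <= cyclic_basis^T)%MS) ->
    mx_invariant M cyclic_basis.
  by move=> sub; apply: mx_invariant_cols => c; rewrite cyclic_basis_col.
have iX : mx_invariant X cyclic_basis.
  by apply: inv => k; rewrite mulmxA mulmxE -exprS Xw_in_basis.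
have iH : mx_invariant H cyclic_basis.
  by apply: inv => k; rewrite Xw_H linearZ /= scalemx_sub ?Xw_in_basis.
have iY : mx_invariant Y cyclic_basis.
  apply: inv => -[|k]; last by rewrite Xw_Y linearZ /= scalemx_sub ?Xw_in_basis.
  by rewrite expr0 mul1mx Xw_Y0 linearZ /= scalemx_sub ?Xw_in_basis.
rewrite -row_free_unit /row_free; have [/eqP | -> //] := simple iX iY iH.
rewrite mxrank_eq0 => /eqP W0; case/negP: w_neq0.
by have := cyclic_basis_col ord0; rewrite W0 col0 expr0 mul1mx => <-.
Qed.

(* Since the space is spanned by p vectors, p = n+1 = dim V. *)
Lemma period_full : p = n.+1.
Proof.
apply/eqP; rewrite eqn_leq p_le /=.
pose Vp : 'M[C]_(p, n.+1) := \matrix_(k, r) v k r 0.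
have sub : (cyclic_basis^T <= Vp)%MS.
  apply/row_subP => c; rewrite -tr_col cyclic_basis_col Xw_mod linearZ /= scalemx_sub //.
  have -> : (v (c %% p))^T = row (Ordinal (ltn_pmod c p_gt0)) Vp.
    by apply/rowP => r; rewrite !mxE.
  exact: row_sub.
have := mxrankS sub; rewrite mxrank_tr.
move: cyclic_basis_unit; rewrite -row_free_unit /row_free => /eqP ->.
by move/leq_trans; apply; apply: rank_leq_row.
Qed.

Lemma basis_tvec (k : nat) : cyclic_basis *m tvec n.+1 a k = v k.
Proof.
rewrite tvec_nat -scalemxAr -colE cyclic_basis_col inordK ?ltn_pmod //.
by rewrite [RHS]Xw_mod period_full.
Qed.

Lemma basis_X : X *m cyclic_basis = cyclic_basis *m Ap_X n.+1 a.
Proof.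
apply: eq_mx_col => c; rewrite !col_mulmx cyclic_basis_col col_Ap_X basis_tvec.
by rewrite mulmxA mulmxE -exprS.
Qed.

Lemma basis_H :
  H *m cyclic_basis = cyclic_basis *m Ap_H n.+1 (periodic_orbit (horner f) mu p) a.
Proof.
apply: eq_mx_col => c; have cp : (c < p)%N by rewrite period_full.
rewrite !col_mulmx cyclic_basis_col col_Ap_H -scalemxAr basis_tvec Xw_H.
by rewrite periodic_orbit_nat.
Qed.

Lemma basis_Y :
  Y *m cyclic_basis = cyclic_basis *m Ap_Y n.+1 (periodic_orbit (horner f) mu p) z a.
Proof.
apply: eq_mx_col => -[[|c] c_lt].
all: rewrite !col_mulmx cyclic_basis_col col_Ap_Y -scalemxAr /=.
  rewrite (periodic_orbit_nat _ _ p_gt0) sub0r tvec_N1 -scalemxAr -colE cyclic_basis_col.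
  by rewrite expr0 mul1mx Xw_Y0 period_full scalerA mulrC.
have cp : (c.+1 < p)%N by rewrite period_full.
have cS : (Posz c.+1 - 1 = Posz c)%R by lia.
by rewrite cS basis_tvec Xw_Y periodic_orbit_nat.
Qed.

End CyclicBasis.

Lemma simple_module_classification :
  exists (lam : int -> C) (zd a : C),
    [/\ a != 0, in_Sf f lam, lam_size lam n.+1 &
        mod_iso X Y H (Ap_X n.+1 a) (Ap_Y n.+1 lam zd a) (Ap_H n.+1 lam a)].
Proof.
have [z YXz] := YX_eval.
have [mu [p [w [w_neq0 Hw p_le least]]]] := periodic_eigenvector.
have [p_gt0 mu_per _] := least.
have [a [u [u_neq0 a_neq0 Hu Xpu]]] := Xp_eigenvector w_neq0 Hw mu_per.
have p_full := period_full YXz u_neq0 Hu Xpu a_neq0 p_le least.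
exists (periodic_orbit (horner f) mu p), z, a; split=> //.
- by move=> i; apply: periodic_orbit_step.
- by rewrite -p_full; apply: periodic_orbit_size.
apply: (mod_iso_intertwine (cyclic_basis_unit YXz u_neq0 Hu Xpu a_neq0 p_le least)).
- exact: (basis_X YXz u_neq0 Hu Xpu a_neq0 p_le least).
- exact: (basis_Y YXz u_neq0 Hu Xpu a_neq0 p_le least).
- exact: (basis_H YXz u_neq0 Hu Xpu a_neq0 p_le least).
Qed.

End SimpleModule.

Unset Implicit Arguments.

Theorem lemma9 (C : numClosedFieldType) (f : {poly C}) (n : nat)
  (X Y H : 'M[C]_n) :
  Hf_module f X Y H -> simple_mod X Y H -> X ^+ n != 0 ->
  exists (lam : int -> C) (zd a : C),
    [/\ a != 0, in_Sf f lam, lam_size lam n &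
        mod_iso X Y H (Ap_X n a) (Ap_Y n lam zd a) (Ap_H n lam a)].
Proof.
case: n X Y H => [|n] X Y H [HX YH YX_XY] [n_gt0 simple] Xn_neq0.
  by rewrite ltnn in n_gt0.
rewrite !peval_mx_horner in HX YH YX_XY.
exact: simple_module_classification HX YH YX_XY simple Xn_neq0.
Qed.
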